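(* Let $\mathcal{D}\subset\mathbb{R}^n$ be a direction set and $\mathcal{D}^W\subset\mathcal{D}$ a grid direction set of width $W$ with directional resolution $d\theta<\pi/2$. Then for any smooth function $u:\mathbb{R}^n\to\mathbb{R}$ and point $x$, $$\lambda^h_{\mathcal{D}^W}u(x)-\lambda_{\mathcal{D}}u(x)=O\big((Wh)^2+d\theta\big).$$
   Context: A direction set $\mathcal{D}\subset\mathbb{R}^n$ spans $\mathbb{R}^n$, is symmetric ($d\in\mathcal{D}\Rightarrow-d\in\mathcal{D}$) and $0\notin\mathcal{D}$. A grid direction set $\mathcal{D}^W$ is a direction set consisting of vectors in $\mathbb{Z}^n$; its width $W$ is $\max_{v\in\mathcal{D}^W}\|v\|_\infty$. For smooth $u$, $\lambda_{\mathcal{D}}u(x)=\inf_{v\in\mathcal{D}}\frac{v^\intercal D^2u(x)v}{|v|^2}$. For $h>0$ and $v\in\mathcal{D}^W$, $D^h_{vv}u(x)=\frac{u(x+hv)-2u(x)+u(x-hv)}{h^2\|v\|^2}$, and $\lambda^h_{\mathcal{D}^W}u(x)=\min_{v\in\mathcal{D}^W}D^h_{vv}u(x)$. The directional resolution of $\mathcal{D}^W$ with respect to $\mathcal{D}$ is $d\theta=\max_{w\in\mathcal{D}}\min_{v\in\mathcal{D}^W}\cos^{-1}(\hat w^\intercal\hat v)$, where $\hat w=w/|w|$, $\hat v=v/|v|$ (the largest angle between a vector of $\mathcal{D}$ and its best approximation in $\mathcal{D}^W$). *)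

From HB Require Import structures.
From mathcomp Require Import all_boot all_order all_algebra.
From mathcomp Require Import all_classical all_reals all_analysis.
Set Implicit Arguments. Unset Strict Implicit. Unset Printing Implicit Defensive.
Import Order.TTheory GRing.Theory Num.Theory.
Import numFieldNormedType.Exports.
Local Open Scope classical_set_scope.
Local Open Scope ring_scope.

Section Defs.
Variables (R : realType) (n : nat).
Local Notation V := 'rV[R]_n.

(* Euclidean inner product and Euclidean norm |v| on R^n = 'rV_n.
   (The library norm `|v| on 'rV_n is the sup norm ||v||_oo.) *)
Definition dotp (v w : V) : R := \sum_(i < n) v ord0 i * w ord0 i.
Definition enorm (v : V) : R := Num.sqrt (dotp v v).

Definition iter_dderiv (vs : seq V) (f : V -> R) : V -> R :=
  foldr (fun v g => 'D_v g) f vs.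

Definition smooth (u : V -> R) : Prop :=
  forall (vs : seq V) (x : V), differentiable (iter_dderiv vs u) x.

Definition hess_quad (u : V -> R) (x v : V) : R := 'D_v ('D_v u) x.

Definition direction_set (D : set V) : Prop :=
  [/\ exists s : seq V, (forall v, v \in s -> D v) /\ (span s = fullv)%VS,
      (forall d, D d -> D (- d)) & ~ D 0].

Definition grid_direction_set (DW : set V) : Prop :=
  direction_set DW /\ forall v, DW v -> forall i, v ord0 i \is a Num.int.

Definition is_width (DW : set V) (W : R) : Prop :=
  (forall v, DW v -> `|v| <= W) /\ exists2 v, DW v & `|v| = W.

Definition lambdaD (D : set V) (u : V -> R) (x : V) : R :=
  inf [set hess_quad u x v / (enorm v) ^+ 2 | v in D].

Definition Dh_vv (h : R) (v : V) (u : V -> R) (x : V) : R :=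
  (u (x + h *: v) - 2 * u x + u (x - h *: v)) / (h ^+ 2 * (enorm v) ^+ 2).

Definition lambdah (DW : set V) (h : R) (u : V -> R) (x : V) : R :=
  inf [set Dh_vv h v u x | v in DW].

Definition angle (w v : V) : R :=
  acos (dotp ((enorm w)^-1 *: w) ((enorm v)^-1 *: v)).

Definition dtheta (D DW : set V) : R :=
  sup [set inf [set angle w v | v in DW] | w in D].

End Defs.

(* For a grid direction v, a fourth-order Taylor expansion of s |-> u (x + s v) shows that the
   symmetric second difference D^h_vv u(x) differs from the Rayleigh quotient
   v^T D^2u(x) v / |v|^2 by O(||v||_oo^2 h^2) = O((W h)^2).  The Rayleigh quotient is the
   Hessian bilinear form evaluated on unit vectors, hence Lipschitz in the angle between two
   directions (|w^ - v^| <= 2 angle, from 1 - cos t <= t^2).  Replacing each w in D by a nearly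
   best grid approximation therefore perturbs the infimum by O(dtheta). *)

From HB Require Import structures.
From mathcomp Require Import all_boot all_order all_algebra.
From mathcomp Require Import all_classical all_reals all_analysis.
From mathcomp Require Import ring lra.
Import Order.TTheory GRing.Theory Num.Theory.
Import numFieldNormedType.Exports.
Local Open Scope classical_set_scope.
Local Open Scope ring_scope.
Set Implicit Arguments. Unset Strict Implicit. Unset Printing Implicit Defensive.

Section RealCalculus.
Variable R : realType.

Lemma norm_bound_succ_of_derive (g g' : R -> R) (c h : R) (k : nat) :
  (forall s : R, is_derive s (1 : R) g (g' s)) -> g 0 = 0 ->
  (forall s, 0 <= s <= h -> `|g' s| <= c * s ^+ k) ->
  forall t, 0 <= t <= h -> `|g t| <= c * t ^+ k.+1.
Proof.
move=> dg g0 g'_le t /andP[t0 th].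
have [->|t_neq0] := eqVneq t 0; first by rewrite g0 normr0 expr0n mulr0.
have tp : 0 < t by rewrite lt_neqAle eq_sym t_neq0.
have g_cont : {within `[0, t], continuous g}.
  by apply: derivable_within_continuous => s _; exact: @ex_derive _ _ _ _ _ _ _ (dg s).
have [s /[!in_itv] /= /andP[s0 st] mvt] := MVT tp (fun s _ => dg s) g_cont.
have hs : 0 <= s <= h by rewrite ltW //= (le_trans (ltW st)).
have c0 : 0 <= c.
  by have := le_trans (normr_ge0 _) (g'_le s hs); rewrite pmulr_lge0 ?exprn_gt0.
rewrite -[g t]subr0 -g0 mvt subr0 normrM (gtr0_norm tp) exprS [t * _]mulrC mulrA.
apply: ler_wpM2r; first exact: ltW.
apply: le_trans (g'_le s hs) _; apply: ler_wpM2l => //.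
by apply: lerXn2r; rewrite ?nnegrE ?ltW.
Qed.

Lemma norm_sin_le (t : R) : 0 <= t -> `|sin t| <= t.
Proof.
move=> t0; rewrite -[t in _ <= t]mul1r -[t in 1 * t]expr1.
apply: (norm_bound_succ_of_derive (@is_derive_sin R) (@sin0 R)); last by rewrite t0 /=.
by move=> s _; rewrite mul1r expr0 cos_max.
Qed.

Lemma one_sub_cos_le_sqr (t : R) : 0 <= t -> 1 - cos t <= t ^+ 2.
Proof.
move=> t0; apply: le_trans (ler_norm _) _; rewrite -[t ^+ 2]mul1r.
apply: (norm_bound_succ_of_derive (g := fun z => 1 - cos z) (g' := sin)); last by rewrite t0 /=.
- move=> s; have := is_deriveB (is_derive_cst (1 : R) s 1) (is_derive_cos s).
  by rewrite sub0r opprK.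
- by rewrite cos0 subrr.
- by move=> s /andP[s0 _]; rewrite mul1r expr1 norm_sin_le.
Qed.

Lemma second_difference_taylor (g : nat -> R -> R) (h K : R) :
  (forall k s, is_derive s (1 : R) (g k) (g k.+1 s)) -> 0 <= h ->
  (forall s, `|s| <= h -> `|g 4 s| <= K) ->
  `|g 0 h - 2 * g 0 0 + g 0 (- h) - h ^+ 2 * g 2 0| <= (K + K) * h ^+ 4.
Proof.
move=> dg h0 g4_le.
have dgN k s : is_derive s (1 : R) (g k \o -%R) (- g k.+1 (- s)).
  by have := is_derive1_comp (dg k (- s)) (is_deriveNid s 1); rewrite mulrN1.
have dcst (c s : R) : is_derive s (1 : R) (cst c) 0 := is_derive_cst c s 1.
have dlin (c s : R) : is_derive s (1 : R) (c \*: id) c.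
  by have := is_deriveZ c (is_derive_id s (1 : R)); rewrite /GRing.scale /= mulr1.
have dsqr (c s : R) : is_derive s (1 : R) (c \*: id ^+ 2) (c * (2 * s)).
  have := is_deriveZ c (is_deriveX 2 (is_derive_id s (1 : R))).
  by rewrite /GRing.scale /= mulr1 expr1.
(* [p0 s] is the error of the second difference with step [s]; each [p_j] is the
   derivative of the previous one and all vanish at 0. *)
pose p3 : R -> R := g 3 - (g 3 \o -%R).
pose p2 : R -> R := g 2 + (g 2 \o -%R) - cst (2 * g 2 0).
pose p1 : R -> R := g 1 - (g 1 \o -%R) - (2 * g 2 0) \*: id.
pose p0 : R -> R := g 0 + (g 0 \o -%R) - cst (2 * g 0 0) - g 2 0 \*: id ^+ 2.
have d3 s : is_derive s (1 : R) p3 (g 4 s + g 4 (- s)).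
  by have := is_deriveB (dg 3 s) (dgN 3 s); rewrite opprK; apply.
have d2 s : is_derive s (1 : R) p2 (p3 s).
  have := is_deriveB (is_deriveD (dg 2 s) (dgN 2 s)) (dcst (2 * g 2 0) s).
  by rewrite subr0; apply.
have d1 s : is_derive s (1 : R) p1 (p2 s).
  have := is_deriveB (is_deriveB (dg 1 s) (dgN 1 s)) (dlin (2 * g 2 0) s).
  by rewrite opprK; apply.
have d0 s : is_derive s (1 : R) p0 (p1 s).
  have := is_deriveB (is_deriveB (is_deriveD (dg 0 s) (dgN 0 s)) (dcst (2 * g 0 0) s))
    (dsqr (g 2 0) s).
  by rewrite subr0 /p1 /= mulrA [g 2 0 * 2]mulrC; apply.
have b3 s : 0 <= s <= h -> `|g 4 s + g 4 (- s)| <= (K + K) * s ^+ 0.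
  move=> /andP[s0 sh]; rewrite expr0 mulr1.
  by apply: le_trans (ler_normD _ _) (lerD _ _); apply: g4_le; rewrite ?normrN ger0_norm.
have z3 : p3 0 = 0 by rewrite /p3 !fctE /= oppr0 subrr.
have z2 : p2 0 = 0 by rewrite /p2 !fctE /= oppr0; ring.
have z1 : p1 0 = 0 by rewrite /p1 !fctE /= oppr0; ring.
have z0 : p0 0 = 0 by rewrite /p0 !fctE /= oppr0 expr0n scaler0; ring.
have b2 := norm_bound_succ_of_derive d3 z3 b3.
have b1 := norm_bound_succ_of_derive d2 z2 b2.
have b0 := norm_bound_succ_of_derive d1 z1 b1.
have hh : 0 <= h <= h by rewrite h0 lexx.
have := norm_bound_succ_of_derive d0 z0 b0 hh.
rewrite /p0 !fctE /=.
by congr (`|_| <= _); rewrite /GRing.scale /=; ring.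
Qed.

End RealCalculus.

Section EuclideanNorm.
Variables (R : realType) (n : nat).
Implicit Types p q w v : 'rV[R]_n.

Lemma dotpC p q : dotp p q = dotp q p.
Proof. by apply: eq_bigr => i _; rewrite mulrC. Qed.

Lemma dotpZl k p q : dotp (k *: p) q = k * dotp p q.
Proof. by rewrite /dotp mulr_sumr; apply: eq_bigr => i _; rewrite mxE mulrA. Qed.

Lemma dotpZr k p q : dotp p (k *: q) = k * dotp p q.
Proof. by rewrite dotpC dotpZl dotpC. Qed.

Lemma dotpBB p q : dotp (p - q) (p - q) = dotp p p - 2 * dotp p q + dotp q q.
Proof.
rewrite /dotp mulr_sumr -sumrB -big_split /=; apply: eq_bigr => i _.
by rewrite !mxE; ring.
Qed.

Lemma dotpp_ge0 p : 0 <= dotp p p.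
Proof. by apply: sumr_ge0 => i _; rewrite -expr2 sqr_ge0. Qed.

Lemma enorm_sqr p : enorm p ^+ 2 = dotp p p.
Proof. by rewrite sqr_sqrtr ?dotpp_ge0. Qed.

Lemma entry_le_enorm p i : `|p ord0 i| <= enorm p.
Proof.
rewrite -(sqrtr_sqr (p ord0 i)); apply: ler_wsqrtr.
rewrite /dotp (bigD1 i) //= -expr2 lerDl.
by apply: sumr_ge0 => j _; rewrite -expr2 sqr_ge0.
Qed.

Lemma entry_le_mx_norm p i : `|p ord0 i| <= `|p|.
Proof.
rewrite [`|p|]mx_normrE.
exact: (le_bigmax _ (fun ij : 'I_1 * 'I_n => `|p ij.1 ij.2|) (ord0, i)).
Qed.

Lemma mx_norm_le_enorm p : `|p| <= enorm p.
Proof.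
have [->|/mx_norm_neq0[[i j] /= pij]] := eqVneq `|p| 0; first exact: sqrtr_ge0.
by rewrite -[`|p|]/(mx_norm p) pij (ord1 i) entry_le_enorm.
Qed.

Lemma enorm_gt0 p : p != 0 -> 0 < enorm p.
Proof. by move=> p0; apply: lt_le_trans (mx_norm_le_enorm p); rewrite normr_gt0. Qed.

Definition normalize p := (enorm p)^-1 *: p.

Lemma dotp_normalize p : p != 0 -> dotp (normalize p) (normalize p) = 1.
Proof.
move=> p0; rewrite dotpZl dotpZr -enorm_sqr.
by field; rewrite gt_eqF ?enorm_gt0.
Qed.

Lemma enorm_normalize p : p != 0 -> enorm (normalize p) = 1.
Proof. by move=> p0; rewrite /enorm dotp_normalize // sqrtr1. Qed.

Lemma dotp_unit_bound p q : dotp p p = 1 -> dotp q q = 1 -> -1 <= dotp p q <= 1.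
Proof.
move=> pp1 qq1; have := dotpp_ge0 (p - q); have := dotpp_ge0 (p - - q).
rewrite !dotpBB -[- q]scaleN1r dotpZl !dotpZr pp1 qq1.
move=> ge0 le0; apply/andP; split; lra.
Qed.

Lemma angle_ge0_lepi w v : w != 0 -> v != 0 -> 0 <= angle w v <= pi.
Proof.
move=> w0 v0; have cB := dotp_unit_bound (dotp_normalize w0) (dotp_normalize v0).
by rewrite /angle acos_ge0 // acos_lepi.
Qed.

Lemma enorm_normalizeB_le w v : w != 0 -> v != 0 ->
  enorm (normalize w - normalize v) <= 2 * angle w v.
Proof.
move=> w0 v0; have cB := dotp_unit_bound (dotp_normalize w0) (dotp_normalize v0).
have th0 : 0 <= angle w v by have /andP[] := angle_ge0_lepi w0 v0.
have cos_angle : cos (angle w v) = dotp (normalize w) (normalize v).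
  by apply: acosK; rewrite in_itv.
rewrite -[2 * _]ger0_norm ?mulr_ge0 // -sqrtr_sqr; apply: ler_wsqrtr.
rewrite dotpBB !dotp_normalize // -cos_angle exprMn.
have := one_sub_cos_le_sqr th0; lra.
Qed.

End EuclideanNorm.

Section IteratedDerivatives.
Variables (R : realType) (n : nat).
Local Notation V := 'rV[R]_n.
Local Notation e_ i := (delta_mx ord0 i : V).
Implicit Types (f : V -> R) (vs : seq V).

Lemma is_derive_along_line f (a w : V) (t : R) : differentiable f (a + t *: w) ->
  is_derive t 1 (fun s => f (a + s *: w)) ('D_w f (a + t *: w)).
Proof.
move=> df.
have line_quot : (fun h : R => h^-1 *: (f (a + (h *: 1 + t) *: w) - f (a + t *: w))) =
    (fun h : R => h^-1 *: (f (h *: w + (a + t *: w)) - f (a + t *: w))).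
  by apply/funext => h; rewrite scalerDl [h *: 1]mulr1 addrCA addrA [a + _]addrC.
apply: DeriveDef; first by rewrite /derivable /= line_quot; exact: diff_derivable.
by rewrite /derive /= line_quot.
Qed.

Lemma iter_dderiv_rcons vs w f :
  iter_dderiv (rcons vs w) f = iter_dderiv vs ('D_w f).
Proof. by rewrite /iter_dderiv foldr_rcons. Qed.

Lemma smooth_dderiv f w : smooth f -> smooth ('D_w f).
Proof. by move=> sf vs y; rewrite -iter_dderiv_rcons. Qed.

Lemma dderiv_coord f w : (forall y, differentiable f y) ->
  'D_w f = fun y => \sum_(i < n) w ord0 i * 'D_(e_ i) f y.
Proof.
move=> df; apply/funext => y; rewrite deriveE // {1}(row_sum_delta w) linear_sum.
by apply: eq_bigr => i _; rewrite linearZ deriveE.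
Qed.

Lemma dderivZ f k w : (forall y, differentiable f y) -> 'D_(k *: w) f = k \*: 'D_w f.
Proof. by move=> df; apply/funext => y; rewrite /= !deriveE // linearZ. Qed.

Lemma dderivB f p q : (forall y, differentiable f y) -> 'D_(p - q) f = 'D_p f - 'D_q f.
Proof. by move=> df; apply/funext => y; rewrite !fctE !deriveE // linearB. Qed.

Lemma iter_dderiv_lincomb vs (F : 'I_n -> V -> R) (c : 'I_n -> R) y :
  (forall i, smooth (F i)) ->
  iter_dderiv vs (fun z => \sum_(i < n) c i * F i z) y
    = \sum_(i < n) c i * iter_dderiv vs (F i) y.
Proof.
move=> sF; elim: vs y => [//|v vs IH] y /=.
have -> : iter_dderiv vs (fun z => \sum_(i < n) c i * F i z) =
          \sum_(i < n) (c i \*: iter_dderiv vs (F i)).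
  by apply/funext => z; rewrite IH fct_sumE.
rewrite derive_sum; last by move=> i; apply/derivableZ/diff_derivable/sF.
by apply: eq_bigr => i _; rewrite deriveZ //; apply/diff_derivable/sF.
Qed.

Lemma iter_dderiv_le vs f M y : smooth f ->
  (forall es : seq 'I_n, size es = size vs ->
     `|iter_dderiv [seq e_ i | i <- es] f y| <= M) ->
  `|iter_dderiv vs f y| <= M * \prod_(w <- vs) (n%:R * `|w|).
Proof.
elim/last_ind: vs f M => [|vs w IH] f M sf le_M.
  by rewrite big_nil mulr1; apply: (le_M [::]).
rewrite iter_dderiv_rcons (dderiv_coord w (sf [::])).
rewrite iter_dderiv_lincomb => [|i]; last exact: smooth_dderiv.
have -> : M * \prod_(j <- rcons vs w) (n%:R * `|j|)
          = \sum_(i < n) `|w| * (M * \prod_(j <- vs) (n%:R * `|j|)).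
  by rewrite big_rcons /= sumr_const card_ord -mulr_natr; ring.
apply: le_trans (ler_norm_sum _ _ _) (ler_sum _ _) => i _.
rewrite normrM; apply: ler_pM => //; first exact: entry_le_mx_norm.
apply: IH => [|es hes]; first exact: smooth_dderiv.
rewrite -iter_dderiv_rcons -map_rcons; apply: le_M.
by rewrite !size_rcons hes.
Qed.

Definition coord_dderiv_sum (f : V -> R) (y : V) (k : nat) : R :=
  \sum_(t : k.-tuple 'I_n) `|iter_dderiv [seq e_ i | i <- t] f y|.

Lemma coord_dderiv_le_sum f y (es : seq 'I_n) :
  `|iter_dderiv [seq e_ i | i <- es] f y| <= coord_dderiv_sum f y (size es).
Proof. by rewrite /coord_dderiv_sum (bigD1 (in_tuple es)) //= lerDl sumr_ge0. Qed.

Lemma coord_dderiv_locally_bounded f x k : smooth f ->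
  exists2 r : R, 0 < r & exists2 M : R, 0 <= M &
    forall y (es : seq 'I_n), `|x - y| < r -> size es = k ->
      `|iter_dderiv [seq e_ i | i <- es] f y| <= M.
Proof.
move=> sf; pose g (t : k.-tuple 'I_n) := iter_dderiv [seq e_ i | i <- t] f.
have : \forall y \near x, forall t, `|g t x - g t y| < 1.
  apply: (@filter_forall _ _ _ (nbhs x)) => t.
  by have /cvgr_dist_lt/(_ 1 ltr01) :=
    differentiable_continuous (sf [seq e_ i | i <- t] x).
move=> /nbhs_ballP[r r0 near_x]; exists r => //.
exists (\sum_t (`|g t x| + 1)) => [|y es xy hes]; first exact: sumr_ge0.
have [t ->] : exists t : k.-tuple 'I_n, es = t.
  by exists (tcast hes (in_tuple es)); rewrite val_tcast.
apply: le_trans (_ : `|g t x| + 1 <= _); last by rewrite (bigD1 t) //= lerDl sumr_ge0.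
have : `|g t x - g t y| < 1 by apply: near_x; rewrite -ball_normE.
rewrite -/(g t y) => /ltW lt1; rewrite -(subKr (g t x) (g t y)).
exact: le_trans (ler_normB _ _) (lerD (lexx _) lt1).
Qed.

End IteratedDerivatives.

Section HessianForm.
Variables (R : realType) (n : nat) (u : 'rV[R]_n -> R) (x : 'rV[R]_n).
Hypothesis su : smooth u.
Implicit Types p q w v : 'rV[R]_n.

Definition hess_form p q := 'D_p ('D_q u) x.

Lemma hess_formZl k p q : hess_form (k *: p) q = k * hess_form p q.
Proof. by rewrite /hess_form !deriveE ?linearZ //; apply: (su [:: q]). Qed.

Lemma hess_formBl p1 p2 q : hess_form (p1 - p2) q = hess_form p1 q - hess_form p2 q.
Proof. by rewrite /hess_form !deriveE ?linearB //; apply: (su [:: q]). Qed.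

Lemma hess_formZr k p q : hess_form p (k *: q) = k * hess_form p q.
Proof.
rewrite /hess_form dderivZ; last exact: (su [::]).
by rewrite deriveZ //; apply/diff_derivable/(su [:: q]).
Qed.

Lemma hess_formBr p q1 q2 : hess_form p (q1 - q2) = hess_form p q1 - hess_form p q2.
Proof.
rewrite /hess_form dderivB; last exact: (su [::]).
by rewrite deriveB //; apply/diff_derivable/(su [:: _]).
Qed.

Definition hess_bound := coord_dderiv_sum u x 2 * n%:R ^+ 2.

Lemma hess_bound_ge0 : 0 <= hess_bound.
Proof. by rewrite mulr_ge0 ?sumr_ge0. Qed.

Lemma hess_form_le p q : `|hess_form p q| <= hess_bound * (enorm p * enorm q).
Proof.
have := @iter_dderiv_le _ _ [:: p; q] u (coord_dderiv_sum u x 2) x su.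
rewrite !big_cons big_nil mulr1 => /(_ _)/le_trans; apply.
  by move=> es /= <-; apply: coord_dderiv_le_sum.
have -> : coord_dderiv_sum u x 2 * (n%:R * `|p| * (n%:R * `|q|))
          = hess_bound * (`|p| * `|q|) by rewrite /hess_bound; ring.
apply: ler_wpM2l; first exact: hess_bound_ge0.
by apply: ler_pM; rewrite ?mx_norm_le_enorm.
Qed.

Definition rayleigh w := hess_quad u x w / enorm w ^+ 2.

Lemma rayleighE w : w != 0 -> rayleigh w = hess_form (normalize w) (normalize w).
Proof.
move=> w0; rewrite hess_formZl hess_formZr /rayleigh /hess_quad /hess_form.
by rewrite mulrA -expr2 exprVn mulrC.
Qed.

Lemma rayleigh_le w : w != 0 -> `|rayleigh w| <= hess_bound.
Proof.
move=> w0; rewrite rayleighE //; apply: le_trans (hess_form_le _ _) _.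
by rewrite enorm_normalize // !mulr1.
Qed.

Lemma rayleigh_lipschitz w v : w != 0 -> v != 0 ->
  `|rayleigh w - rayleigh v| <= 4 * hess_bound * angle w v.
Proof.
move=> w0 v0; rewrite !rayleighE //.
set a := normalize w; set b := normalize v.
have -> : hess_form a a - hess_form b b = hess_form (a - b) a + hess_form b (a - b).
  by rewrite hess_formBl hess_formBr addrA subrK.
apply: le_trans (ler_normD _ _) _.
apply: le_trans (lerD (hess_form_le _ _) (hess_form_le _ _)) _.
rewrite !enorm_normalize // mulr1 mul1r -mulrDr.
have -> : 4 * hess_bound * angle w v = hess_bound * (2 * angle w v + 2 * angle w v) by ring.
by apply: ler_wpM2l; rewrite ?hess_bound_ge0 // lerD // enorm_normalizeB_le.
Qed.

End HessianForm.

Section FiniteDifference.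
Variables (R : realType) (n : nat) (u : 'rV[R]_n -> R) (x : 'rV[R]_n).
Hypothesis su : smooth u.

Lemma Dh_vv_sub_rayleigh_le (r M h W : R) (v : 'rV[R]_n) :
  (forall y (es : seq 'I_n), `|x - y| < r -> size es = 4 ->
     `|iter_dderiv [seq delta_mx ord0 i | i <- es] u y| <= M) ->
  0 <= M -> v != 0 -> 0 < h -> `|v| <= W -> W * h < r ->
  `|Dh_vv h v u x - rayleigh u x v| <= (M + M) * n%:R ^+ 4 * (W * h) ^+ 2.
Proof.
move=> le_M M0 v0 h0 vW Wh_r.
have W0 : 0 <= W := le_trans (normr_ge0 v) vW.
pose g k s := iter_dderiv (nseq k v) u (x + s *: v).
have dg k s : is_derive s (1 : R) (g k) (g k.+1 s).
  exact/is_derive_along_line/su.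
set K := M * (n%:R * `|v|) ^+ 4.
have g4_le s : `|s| <= h -> `|g 4 s| <= K.
  move=> sh; have := @iter_dderiv_le _ _ (nseq 4 v) u M (x + s *: v) su.
  rewrite big_nseq /= !mulr1 -!expr2 -exprS -[_ * (_ ^+ 3)]exprS; apply => es hes.
  apply: le_M; last by rewrite hes.
  rewrite opprD addNKr normrN normrZ mulrC; apply: le_lt_trans Wh_r.
  exact: ler_pM.
have := second_difference_taylor dg (ltW h0) g4_le.
rewrite /g /= scale0r addr0 scaleNr -/(hess_quad u x v) => taylor.
have e0 := enorm_gt0 v0.
have -> : Dh_vv h v u x - rayleigh u x v =
  (u (x + h *: v) - 2 * u x + u (x - h *: v) - h ^+ 2 * hess_quad u x v)
    / (h ^+ 2 * enorm v ^+ 2).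
  by rewrite /Dh_vv /rayleigh; field; rewrite !gt_eqF.
have den0 : 0 < h ^+ 2 * enorm v ^+ 2 by rewrite mulr_gt0 ?exprn_gt0.
rewrite normrM normfV (gtr0_norm den0) ler_pdivrMr //; apply: le_trans taylor _.
have v4_le : `|v| ^+ 4 <= W ^+ 2 * enorm v ^+ 2.
  rewrite (_ : 4%N = 2 + 2)%N // exprD; apply: ler_pM; rewrite ?exprn_ge0 //.
    by apply: lerXn2r; rewrite ?nnegrE.
  by apply: lerXn2r; rewrite ?nnegrE ?sqrtr_ge0 ?mx_norm_le_enorm.
have c0 : 0 <= (M + M) * n%:R ^+ 4 * h ^+ 4 by rewrite !mulr_ge0 ?addr_ge0 ?exprn_ge0 ?(ltW h0).
rewrite [_ * h ^+ 4](_ : _ = (M + M) * n%:R ^+ 4 * h ^+ 4 * `|v| ^+ 4); last by rewrite /K; ring.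
rewrite [X in _ <= X](_ : _ = (M + M) * n%:R ^+ 4 * h ^+ 4 * (W ^+ 2 * enorm v ^+ 2)); last by ring.
exact: ler_wpM2l.
Qed.

End FiniteDifference.

Section InfPerturbation.
Variables (R : realType) (T : Type) (D DW : set T).
Variables (f g : T -> R) (ang : T -> T -> R) (K eps L A : R).
Hypotheses (DW_sub : DW `<=` D) (DW_neq0 : DW !=set0).
Hypothesis f_le : forall w, D w -> `|f w| <= K.
Hypothesis g_near_f : forall v, DW v -> `|g v - f v| <= eps.
Hypothesis f_lipschitz : forall w v, D w -> DW v -> `|f w - f v| <= L * ang w v.
Hypothesis ang_bounded : forall w v, D w -> DW v -> 0 <= ang w v <= A.
Hypothesis L_ge0 : 0 <= L.

Local Notation inf_f := (inf [set f w | w in D]).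
Local Notation inf_g := (inf [set g v | v in DW]).
Local Notation inf_ang w := (inf [set ang w v | v in DW]).
Local Notation resolution := (sup [set inf_ang w | w in D]).

Let has_inf_f : has_inf [set f w | w in D].
Proof.
have [v DWv] := DW_neq0; split; first by exists (f v), v => //; apply: DW_sub.
by exists (- K) => _ [w Dw <-]; have /ler_normlP[] := f_le Dw; rewrite lerNl.
Qed.

Let has_inf_g : has_inf [set g v | v in DW].
Proof.
have [v DWv] := DW_neq0; split; first by exists (g v), v.
exists (- K - eps) => _ [w DWw <-].
have := f_le (DW_sub DWw); have := g_near_f DWw; rewrite !ler_norml.
by move=> /andP[? _] /andP[? _]; lra.
Qed.

Let has_inf_ang w : D w -> has_inf [set ang w v | v in DW].
Proof.
move=> Dw; have [v DWv] := DW_neq0; split; first by exists (ang w v), v.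
by exists 0 => _ [v' DWv' <-]; have /andP[] := ang_bounded Dw DWv'.
Qed.

Let inf_ang_bounded w : D w -> 0 <= inf_ang w <= A.
Proof.
move=> Dw; have [v DWv] := DW_neq0; apply/andP; split.
  apply: lb_le_inf => [|_ [v' DWv' <-]]; first by exists (ang w v), v.
  by case/andP: (ang_bounded Dw DWv').
apply: le_trans (_ : ang w v <= A); last by case/andP: (ang_bounded Dw DWv).
by apply: (ge_inf (has_inf_ang Dw).2); exists v.
Qed.

Let inf_ang_le_resolution w : D w -> inf_ang w <= resolution.
Proof.
move=> Dw; apply: sup_upper_bound; last by exists w.
have [v DWv] := DW_neq0; split; first by exists (inf_ang v), v => //; apply: DW_sub.
by exists A => _ [w' Dw' <-]; case/andP: (inf_ang_bounded Dw').
Qed.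

Lemma resolution_ge0 : 0 <= resolution.
Proof.
have [v /DW_sub Dv] := DW_neq0.
by apply: le_trans (inf_ang_le_resolution Dv); case/andP: (inf_ang_bounded Dv).
Qed.

Let inf_f_le_inf_g : inf_f - eps <= inf_g.
Proof.
apply: lb_le_inf => [|_ [v DWv <-]]; first by case: has_inf_g.
have : inf_f <= f v by apply: (ge_inf has_inf_f.2); exists v => //; apply: DW_sub.
by have := g_near_f DWv; rewrite ler_norml => /andP[? _]; lra.
Qed.

Let inf_g_le_inf_f : inf_g <= inf_f + eps + L * resolution.
Proof.
apply/ler_addgt0Pr => e e0.
pose e' := e / (1 + L); have e'0 : 0 < e' by rewrite divr_gt0 // ltr_pwDl.
have [_ [w Dw <-] fw_lt] := inf_adherent e'0 has_inf_f.
have [_ [v DWv <-] angv_lt] := inf_adherent e'0 (has_inf_ang Dw).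
have inf_g_le : inf_g <= g v by apply: (ge_inf has_inf_g.2); exists v.
have Lang : L * ang w v <= L * resolution + L * e'.
  by rewrite -mulrDr ler_wpM2l // ltW // (lt_le_trans angv_lt) // lerD2r inf_ang_le_resolution.
have := f_lipschitz Dw DWv; have := g_near_f DWv; rewrite !ler_norml.
have : e' + L * e' = e by rewrite /e'; field; rewrite gt_eqF // ltr_pwDl.
move: Lang; lra.
Qed.

Lemma inf_image_perturb : `|inf_g - inf_f| <= eps + L * resolution.
Proof.
have := mulr_ge0 L_ge0 resolution_ge0.
by rewrite ler_norml; have := inf_f_le_inf_g; have := inf_g_le_inf_f; lra.
Qed.

End InfPerturbation.

Theorem mainTheorem10 (R : realType) (n : nat) (u : 'rV[R]_n -> R)
    (hu : smooth u) (x : 'rV[R]_n) :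
  exists C : R, exists delta : R, 0 < C /\ 0 < delta /\
  forall (D DW : set 'rV[R]_n) (W : R),
    direction_set D -> grid_direction_set DW -> DW `<=` D ->
    is_width DW W -> dtheta D DW < pi / 2 ->
    forall h : R, 0 < h -> W * h <= delta ->
    `| lambdah DW h u x - lambdaD D u x | <= C * ((W * h) ^+ 2 + dtheta D DW).
Proof.
have [r r0 [M M0 le_M]] := coord_dderiv_locally_bounded x 4 hu.
pose C1 := (M + M) * n%:R ^+ 4; pose L := 4 * hess_bound u x.
have C1_ge0 : 0 <= C1 by rewrite mulr_ge0 ?addr_ge0 ?exprn_ge0.
have L_ge0 : 0 <= L by rewrite mulr_ge0 ?hess_bound_ge0.
exists (C1 + L + 1), (r / 2); split; first by rewrite ltr_wpDl ?addr_ge0.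
split=> [|D DW W [_ _ D0] _ DW_sub [W_ge [v0 DWv0 _]] _ h h0 Wh_le]; first exact: divr_gt0.
have Wh_r : W * h < r by rewrite (le_lt_trans Wh_le) // ltr_pdivrMr // ltr_pMr // ltr1n.
have nz w : D w -> w != 0 by apply: contraPneq => ->.
have ang_bounded w v : D w -> DW v -> 0 <= angle w v <= pi.
  by move=> /nz w0 /DW_sub/nz v0'; apply: angle_ge0_lepi.
have rayleigh_bounded w : D w -> `|rayleigh u x w| <= hess_bound u x.
  by move/nz; apply: rayleigh_le.
have Dh_vv_near v : DW v -> `|Dh_vv h v u x - rayleigh u x v| <= C1 * (W * h) ^+ 2.
  move=> DWv; have /nz v_neq0 := DW_sub _ DWv.
  exact (Dh_vv_sub_rayleigh_le hu le_M M0 v_neq0 h0 (W_ge _ DWv) Wh_r).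
have rayleigh_lip w v : D w -> DW v -> `|rayleigh u x w - rayleigh u x v| <= L * angle w v.
  by move=> /nz w0 /DW_sub/nz v0'; apply: rayleigh_lipschitz.
have DW_neq0 : DW !=set0 by exists v0.
have dtheta_ge0 : 0 <= dtheta D DW := resolution_ge0 DW_sub DW_neq0 ang_bounded.
have := inf_image_perturb DW_sub DW_neq0 rayleigh_bounded Dh_vv_near rayleigh_lip ang_bounded L_ge0.
move/le_trans; apply.
rewrite mulrDr; apply: lerD; apply: ler_wpM2r; rewrite ?sqr_ge0 //; lra.
Qed.
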